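(* For every finite forest $\mathcal{F}$ with at least one edge, the non-cover complex $\mathcal{NC}(\mathcal{F})$ is either contractible or homotopy equivalent to a sphere $\mathbb{S}^d$ for some $d\ge -1$ (with the convention $\mathbb{S}^{-1}=\emptyset$).
   Context: For a finite simple graph $H$, the non-cover complex $\mathcal{NC}(H)$ is the simplicial complex whose simplices are the subsets $S\subseteq V(H)$ such that $V(H)\setminus S$ contains both endpoints of some edge of $H$. Homotopy types refer to geometric realizations. *)

From HB Require Import structures.
From mathcomp Require Import all_boot all_order all_algebra.
From mathcomp Require Import boolp classical_sets reals topology function_spaces.
Set Implicit Arguments. Unset Strict Implicit. Unset Printing Implicit Defensive.
Import Order.TTheory GRing.Theory Num.Theory.
Import numFieldTopology.Exports.
Local Open Scope classical_set_scope.
Local Open Scope ring_scope.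

Definition simple_graph (V : finType) (e : rel V) : Prop :=
  symmetric e /\ irreflexive e.

Definition has_cycle (V : finType) (e : rel V) : Prop :=
  exists p : seq V, [/\ (3 <= size p)%N, uniq p & cycle e p].

Definition forest (V : finType) (e : rel V) : Prop :=
  simple_graph e /\ ~ has_cycle e.

Definition has_edge (V : finType) (e : rel V) : Prop :=
  exists u v, e u v.

Definition non_cover_complex (V : finType) (e : rel V) : {set V} -> bool :=
  fun S => [exists u, exists v, [&& e u v, u \notin S & v \notin S]].

(** Geometric realization of an (abstract) simplicial complex, given by its
    set of faces, on the finite vertex set V, inside the product space V -> R:
    points are barycentric coordinate vectors whose support is a face. *)
Definition geom_realization (R : realType) (V : finType)
    (Delta : {set V} -> bool) : set {ptws V -> R} :=
  [set x | [/\ (forall v, 0 <= x v), \sum_(v : V) x v = 1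
             & Delta (finset (fun v => x v != 0))]].

Definition cont_map {X Y : topologicalType} (A : set X) (B : set Y)
    (f : X -> Y) : Prop :=
  {within A, continuous f} /\ (forall x, A x -> B (f x)).

Definition homotopic (R : realType) {X Y : topologicalType} (A : set X)
    (B : set Y) (f g : X -> Y) : Prop :=
  exists H : R * X -> Y,
    [/\ cont_map ((`[0, 1]%classic : set R) `*` A) B H,
        (forall x, A x -> H (0, x) = f x) &
        (forall x, A x -> H (1, x) = g x)].

Definition homotopy_equivalent (R : realType) {X Y : topologicalType}
    (A : set X) (B : set Y) : Prop :=
  exists (f : X -> Y) (g : Y -> X),
    [/\ cont_map A B f, cont_map B A g,
        homotopic R A A (g \o f) id & homotopic R B B (f \o g) id].

Definition contractible (R : realType) {X : topologicalType} (A : set X) : Prop :=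
  homotopy_equivalent R A [set (0 : R)].

(** The Euclidean unit sphere S^(k-1) in R^k (k = d+1); for k = 0 it is empty,
    matching the convention S^(-1) = empty. *)
Definition sphere (R : realType) (k : nat) : set {ptws 'I_k -> R} :=
  [set x | \sum_(i < k) x i ^+ 2 = 1].

Arguments geom_realization R {V} Delta.
Arguments sphere R k : clear implicits.

From HB Require Import structures.
From mathcomp Require Import all_boot all_order all_algebra.
From mathcomp Require Import boolp classical_sets reals topology function_spaces.
From mathcomp Require Import normedtype realfun.
From mathcomp Require Import ring lra zify.
Import numFieldTopology.Exports.
Import Order.TTheory GRing.Theory Num.Theory.
Set Implicit Arguments. Unset Strict Implicit. Unset Printing Implicit Defensive.
Local Open Scope classical_set_scope.
Local Open Scope ring_scope.

(* Generalize to the non-cover complex of the subgraph induced on a vertex set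
   T in which the vertices of a set M carry loops, and induct on |T|.  If every
   vertex of T is marked, the faces are the proper subsets of T: the boundary
   of a simplex, i.e. a sphere.  If some unmarked vertex has only marked
   neighbours, the complex is a cone with that apex, hence contractible.
   Otherwise the unmarked vertices span a subforest without isolated vertices,
   which has a leaf l with unique unmarked neighbour z; pushing the weight of z
   onto l deformation retracts the complex onto the one on T \ z in which the
   neighbours of z are marked. *)

Lemma fst_continuous {X Y : topologicalType} : continuous (@fst X Y).
Proof. by move=> p; exact: cvg_fst. Qed.

Lemma snd_continuous {X Y : topologicalType} : continuous (@snd X Y).
Proof. by move=> p; exact: cvg_snd. Qed.

(* Pointwise forms of [cvgD], [cvgM], ... stated for lambda terms, so that
   they unify with goals [{for x, continuous (fun y => ...)}]. *)
Section RealContinuity.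
Context {R : realType} {T : topologicalType}.
Implicit Types (f g : T -> R) (x : T).

Lemma continuous_at_add f g x : {for x, continuous f} -> {for x, continuous g} ->
  {for x, continuous (fun y => f y + g y)}.
Proof. by move=> cf cg; exact: (@cvgD R R^o T _ _ f g _ _ cf cg). Qed.

Lemma continuous_at_sub f g x : {for x, continuous f} -> {for x, continuous g} ->
  {for x, continuous (fun y => f y - g y)}.
Proof. by move=> cf cg; exact: (@cvgB R R^o T _ _ f g _ _ cf cg). Qed.

Lemma continuous_at_opp f x : {for x, continuous f} ->
  {for x, continuous (fun y => - f y)}.
Proof. by move=> cf; exact: (@cvgN R R^o T _ _ f _ cf). Qed.

Lemma continuous_at_mul f g x : {for x, continuous f} -> {for x, continuous g} ->
  {for x, continuous (fun y => f y * g y)}.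
Proof. by move=> cf cg; exact: (@cvgM R T _ _ f g _ _ cf cg). Qed.

Lemma continuous_at_inv f x : f x != 0 -> {for x, continuous f} ->
  {for x, continuous (fun y => (f y)^-1)}.
Proof. by move=> fx0 cf; exact: (@cvgV R T _ _ f _ fx0 cf). Qed.

Lemma continuous_at_max f g x : {for x, continuous f} -> {for x, continuous g} ->
  {for x, continuous (fun y => Num.max (f y) (g y))}.
Proof. exact: continuous_max. Qed.

Lemma continuous_at_sqrt f x : {for x, continuous f} ->
  {for x, continuous (fun y => Num.sqrt (f y))}.
Proof. by move=> cf; apply: continuous_comp cf _; exact: sqrt_continuous. Qed.

Lemma continuous_at_big (op : R -> R -> R) (idx : R) (I : Type) (r : seq I)
    (P : pred I) (F : I -> T -> R) x :
  (forall f g, {for x, continuous f} -> {for x, continuous g} ->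
     {for x, continuous (fun y => op (f y) (g y))}) ->
  (forall i, {for x, continuous (F i)}) ->
  {for x, continuous (fun y => \big[op/idx]_(i <- r | P i) F i y)}.
Proof.
move=> cop cF; elim: r => [|i r IHr].
  have -> : (fun y => \big[op/idx]_(j <- [::] | P j) F j y) = fun=> idx.
    by apply: funext => y; rewrite big_nil.
  exact: cvg_cst.
have -> : (fun y => \big[op/idx]_(j <- i :: r | P j) F j y) =
    fun y => if P i then op (F i y) (\big[op/idx]_(j <- r | P j) F j y)
             else \big[op/idx]_(j <- r | P j) F j y.
  by apply: funext => y; rewrite big_cons.
by case: (P i) => //; exact: cop.
Qed.

End RealContinuity.

Section WithinContinuity.
Context {X Y Z : topologicalType}.

Lemma within_cvg_within (A : set X) (B : set Y) (f : X -> Y) x :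
  A x -> {within A, continuous f} -> (forall y, A y -> B (f y)) ->
  f @ within A (nbhs x) --> within B (nbhs (f x)).
Proof.
move=> Ax /subspace_continuousP /(_ x Ax) cf fAB P /= /cf.
have: within A (nbhs x) (f @^-1` B) by apply: nearW => y /fAB.
by apply: filterS2 => y By /(_ By).
Qed.

Lemma continuous_within_comp (A : set X) (B : set Y) (f : X -> Y) (g : Y -> Z) :
  {within A, continuous f} -> (forall x, A x -> B (f x)) ->
  {within B, continuous g} -> {within A, continuous (g \o f)}.
Proof.
move=> cf fAB cg; apply/subspace_continuousP => x Ax.
have /subspace_continuousP gB := cg.
apply: cvg_trans (gB _ (fAB x Ax)).
exact: cvg_fmap2 (within_cvg_within Ax cf fAB).
Qed.

Lemma continuous_within_pair (A : set X) (f : X -> Y) (g : X -> Z) :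
  {within A, continuous f} -> {within A, continuous g} ->
  {within A, continuous (fun x => (f x, g x))}.
Proof.
move=> /subspace_continuousP cf /subspace_continuousP cg.
by apply/subspace_continuousP => x Ax; apply: cvg_pair; [exact: cf|exact: cg].
Qed.

Lemma continuous_within_eq (A : set X) (f g : X -> Y) :
  (forall x, A x -> f x = g x) ->
  {within A, continuous f} -> {within A, continuous g}.
Proof. by move=> fg; apply: subspace_eq_continuous => x /set_mem /fg. Qed.

(* The pieces need only be closed in the ambient space, not in [A]. *)
Lemma continuous_within_paste (A C D : set X) (f : X -> Y) :
  closed C -> closed D -> A `<=` C `|` D ->
  {within A `&` C, continuous f} -> {within A `&` D, continuous f} ->
  {within A, continuous f}.
Proof.
move=> cC cD ACD /subspace_continuousP fC /subspace_continuousP fD.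
apply/subspace_continuousP => x Ax P /= nP.
have near_piece (E : set X) : closed E ->
    (forall x, (A `&` E) x -> f @ within (A `&` E) (nbhs x) --> f x) ->
    nbhs x (fun y => E y -> A y -> P (f y)).
  move=> cE fE; have [Ex|nEx] := pselect (E x).
    have : nbhs x (fun y => (A `&` E) y -> P (f y)) by exact: fE.
    by apply: filterS => y Py Ey Ay; exact: Py.
  have : nbhs x (~` E) by apply: open_nbhs_nbhs; split => //; exact: closed_openC.
  by apply: filterS => y nEy /nEy.
apply: filterS2 (near_piece _ cC fC) (near_piece _ cD fD) => y PC PD Ay.
by case: (ACD y Ay) => [/PC|/PD]; apply.
Qed.

End WithinContinuity.

Section ContinuousMaps.
Context {X Y Z : topologicalType}.

Lemma cont_map_id (A B : set X) : A `<=` B -> cont_map A B id.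
Proof. by split => //; apply: continuous_subspaceT => x; exact: cvg_id. Qed.

Lemma cont_map_cst (A : set X) (B : set Y) (b : Y) :
  B b -> cont_map A B (fun _ => b).
Proof. by split => //; apply: continuous_subspaceT; exact: cst_continuous. Qed.

Lemma cont_map_comp (A : set X) (B : set Y) (C : set Z) f g :
  cont_map A B f -> cont_map B C g -> cont_map A C (g \o f).
Proof.
move=> [cf fAB] [cg gBC]; split; last by move=> x /fAB /gBC.
exact: continuous_within_comp cf fAB cg.
Qed.

End ContinuousMaps.

Section Homotopy.
Variable R : realType.
Context {X Y Z : topologicalType}.
Local Notation I01 := (`[0, 1]%classic : set R).

Lemma homotopic_refl (A : set X) (B : set Y) f :
  cont_map A B f -> homotopic R A B f f.
Proof.
move=> [cf fAB]; exists (fun p : R * X => f p.2); split => //; split.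
- apply: continuous_within_comp cf; last by move=> p [].
  exact/continuous_subspaceT/snd_continuous.
- by move=> p [_ /fAB].
Qed.

Lemma homotopic_eq (A : set X) (B : set Y) f f' g g' :
  (forall x, A x -> f x = f' x) -> (forall x, A x -> g x = g' x) ->
  homotopic R A B f g -> homotopic R A B f' g'.
Proof.
move=> ff' gg' [H [cH H0 H1]]; exists H; split => // x Ax.
  by rewrite -ff'// H0.
by rewrite -gg'// H1.
Qed.

Lemma homotopic_compl (A : set X) (B : set Y) (C : set Z) f g k :
  homotopic R A B f g -> cont_map B C k -> homotopic R A C (k \o f) (k \o g).
Proof.
move=> [H [cH H0 H1]] ck; exists (k \o H); split.
- exact: cont_map_comp cH ck.
- by move=> x Ax /=; rewrite H0.
- by move=> x Ax /=; rewrite H1.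
Qed.

Lemma homotopic_compr (A : set X) (B : set Y) (C : set Z) f g k :
  homotopic R B C f g -> cont_map A B k -> homotopic R A C (f \o k) (g \o k).
Proof.
move=> [H [cH H0 H1]] [ck kAB].
exists (H \o (fun p : R * X => (p.1, k p.2))); split.
- apply: cont_map_comp cH; split; last by move=> [t x] [/= ? /kAB].
  apply: continuous_within_pair.
    exact/continuous_subspaceT/fst_continuous.
  apply: continuous_within_comp ck; last by move=> p [].
  exact/continuous_subspaceT/snd_continuous.
- by move=> x Ax /=; rewrite H0 //; exact: kAB.
- by move=> x Ax /=; rewrite H1 //; exact: kAB.
Qed.

Lemma continuous_time_affine (a b : R) :
  continuous (fun p : R * X => (a * p.1 - b, p.2)).
Proof.
move=> p; have ct : {for p, continuous (fun q : R * X => a * q.1 - b)}.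
  apply: continuous_at_sub; last exact: cst_continuous.
  by apply: continuous_at_mul; [exact: cst_continuous|exact: fst_continuous].
exact: cvg_pair ct (@snd_continuous _ _ p).
Qed.

Lemma homotopic_trans (A : set X) (B : set Y) f g h :
  homotopic R A B f g -> homotopic R A B g h -> homotopic R A B f h.
Proof.
move=> [H1 [[cH1 H1B] H10 H11]] [H2 [[cH2 H2B] H20 H21]].
pose half (b : R) (p : R * X) := (2 * p.1 - b, p.2).
pose C := [set p : R * X | p.1 <= 2^-1].
pose D := [set p : R * X | 2^-1 <= p.1].
have I01E t : I01 t <-> 0 <= t <= 1 by rewrite /= in_itv.
have firstI p : (I01 `*` A `&` C) p -> (I01 `*` A) (half 0 p).
  case: p => t x [[/I01E/andP[t0 t1] Ax] tC]; rewrite /C /= in t0 t1 tC.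
  by split => //; apply/I01E/andP; rewrite /half /=; split; lra.
have secondI p : (I01 `*` A `&` D) p -> (I01 `*` A) (half 1 p).
  case: p => t x [[/I01E/andP[t0 t1] Ax] tD]; rewrite /D /= in t0 t1 tD.
  by split => //; apply/I01E/andP; rewrite /half /=; split; lra.
exists (fun p => if p.1 <= 2^-1 then H1 (half 0 p) else H2 (half 1 p)); split; first split.
- apply: (@continuous_within_paste _ _ _ C D).
  + exact: (closed_comp (fun p _ => @fst_continuous _ _ p) (@closed_le _ _)).
  + exact: (closed_comp (fun p _ => @fst_continuous _ _ p) (@closed_ge _ _)).
  + by move=> [t x] _; rewrite /C /D /=; case: (lerP t 2^-1) => ht; [left|right; apply: ltW].
  + apply: (@continuous_within_eq _ _ _ (H1 \o half 0)); first by move=> p [_ /= ->].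
    apply: continuous_within_comp firstI cH1.
    by apply: continuous_subspaceT; exact: continuous_time_affine.
  + apply: (@continuous_within_eq _ _ _ (H2 \o half 1)).
      move=> [t x] [[/= _ Ax] tD]; rewrite /D /= in tD; case: ifP => // tC.
      have -> : t = 2^-1 by apply/eqP; rewrite eq_le tD tC.
      have [-> ->] : half 0 (2^-1, x) = (1, x) /\ half 1 (2^-1, x) = (0, x).
        by rewrite /half /=; split; congr (_, x); lra.
      by rewrite H11 // H20.
    apply: continuous_within_comp secondI cH2.
    by apply: continuous_subspaceT; exact: continuous_time_affine.
- move=> [t x] [/I01E t01 Ax] /=; case: ifP => ht.
    by apply: H1B; apply: firstI; split => //; split => //; exact/I01E.
  apply: H2B; apply: secondI; split; first by split => //; exact/I01E.
  by rewrite /D /=; apply: ltW; rewrite ltNge ht.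
- move=> x Ax /=; rewrite ifT; last lra.
  by rewrite /half /= -H10 //; congr (H1 (_, x)); lra.
- move=> x Ax /=; rewrite ifF; last by apply/negbTE; rewrite -ltNge; lra.
  by rewrite /half /= -H21 //; congr (H2 (_, x)); lra.
Qed.

End Homotopy.

Section HomotopyEquivalence.
Variable R : realType.

Lemma homotopic_id {X : topologicalType} (A : set X) f :
  (forall x, A x -> f x = x) -> homotopic R A A f id.
Proof.
have id_refl := homotopic_refl R (cont_map_id (@subset_refl _ A)).
move=> fid; apply: (homotopic_eq _ _ id_refl) => //.
by move=> x /fid.
Qed.

Lemma homotopy_equivalent_trans {X Y Z : topologicalType}
    (A : set X) (B : set Y) (C : set Z) :
  homotopy_equivalent R A B -> homotopy_equivalent R B C ->
  homotopy_equivalent R A C.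
Proof.
move=> [f1 [g1 [cf1 cg1 gf1 fg1]]] [f2 [g2 [cf2 cg2 gf2 fg2]]].
exists (f2 \o f1), (g1 \o g2); split.
- exact: cont_map_comp cf1 cf2.
- exact: cont_map_comp cg2 cg1.
- by apply: homotopic_trans gf1; exact: homotopic_compr (homotopic_compl gf2 cg1) cf1.
- by apply: homotopic_trans fg2; exact: homotopic_compr (homotopic_compl fg1 cf2) cg2.
Qed.

Lemma homeomorphic_homotopy_equivalent {X Y : topologicalType}
    (A : set X) (B : set Y) f g :
  cont_map A B f -> cont_map B A g ->
  (forall x, A x -> g (f x) = x) -> (forall y, B y -> f (g y) = y) ->
  homotopy_equivalent R A B.
Proof. by move=> cf cg gf fg; exists f, g; split => //; exact: homotopic_id. Qed.

Lemma homotopy_equivalent_set1 {X Y : topologicalType} (a : X) (b : Y) :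
  homotopy_equivalent R [set a] [set b].
Proof.
by apply: (@homeomorphic_homotopy_equivalent _ _ _ _ (fun=> b) (fun=> a));
  do ?[exact: cont_map_cst|by move=> ? ->].
Qed.

End HomotopyEquivalence.

Lemma ptws_continuous_at (R : realType) (I : Type) {X : topologicalType}
    (h : X -> {ptws I -> R}) x :
  (forall i, {for x, continuous (fun y => h y i)}) -> {for x, continuous h}.
Proof.
move=> ch.
have [_ ] := @cvg_sup _ _ (fun i => Topological.class
    (initial_topology (fun f : (forall i, (fun _ => R) i) => f i))) (h @ x) (h x) _.
apply=> i; apply/cvg_image.
  by rewrite eqEsubset; split => // v _; exists (fun _ => v).
apply: cvg_trans (ch i) => W /= hW.
exists ((fun f : {ptws I -> R} => f i) @^-1` W) => //.
by rewrite image_preimage // eqEsubset; split => // v _; exists (fun _ => v).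
Qed.

Lemma ptws_proj_continuous (R : realType) (I : eqType) (i : I) :
  continuous (fun x : {ptws I -> R} => x i).
Proof. exact: (@proj_continuous I (fun _ => R) i). Qed.

Section StraightLineRetraction.
Variables (R : realType) (I : eqType).
Implicit Types (A B : set {ptws I -> R}).

Lemma homotopy_equivalent_retract A B (r : {ptws I -> R} -> {ptws I -> R}) :
  (forall i, continuous (fun x => r x i)) ->
  (forall x, A x -> B (r x)) -> B `<=` A -> (forall x, B x -> r x = x) ->
  (forall x t, A x -> 0 <= t <= 1 -> A (fun i => t * x i + (1 - t) * r x i)) ->
  homotopy_equivalent R A B.
Proof.
move=> cr rAB BA rB segA.
have cseg i (p : R * {ptws I -> R}) :
    {for p, continuous (fun q : R * {ptws I -> R} => q.1 * q.2 i + (1 - q.1) * r q.2 i)}.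
  have ct : {for p, continuous (fun q : R * {ptws I -> R} => q.1)} := @fst_continuous _ _ p.
  have c1 : {for p, continuous (fun _ : R * {ptws I -> R} => 1 : R)}.
    exact: cst_continuous.
  have cx : {for p, continuous (fun q : R * {ptws I -> R} => q.2 i)}.
    exact: continuous_comp (@snd_continuous _ _ p) (@proj_continuous I (fun _ => R) i _).
  have crx : {for p, continuous (fun q : R * {ptws I -> R} => r q.2 i)}.
    exact: (@continuous_comp _ _ _ snd (fun x => r x i) p (@snd_continuous _ _ p) (cr i p.2)).
  exact: continuous_at_add (continuous_at_mul ct cx)
    (continuous_at_mul (continuous_at_sub c1 ct) crx).
exists r, id; split.
- split => //; apply: continuous_subspaceT => x.
  by apply: ptws_continuous_at => i; exact: cr.
- exact: cont_map_id BA.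
- exists (fun p : R * {ptws I -> R} =>
      ((fun i => p.1 * p.2 i + (1 - p.1) * r p.2 i) : {ptws I -> R})); split.
  + split; last by move=> [t x] [/= t01 Ax]; apply: segA; rewrite // -in_itv.
    by apply: continuous_subspaceT => p; apply: ptws_continuous_at => i; exact: cseg.
  + by move=> x Ax /=; apply: funext => i; rewrite mul0r add0r subr0 mul1r.
  + by move=> x Ax /=; apply: funext => i; rewrite mul1r subrr mul0r addr0.
- exact: homotopic_id.
Qed.

End StraightLineRetraction.

Section MarkedNonCover.
Variables (V : finType) (e : rel V).
Hypotheses (e_sym : symmetric e) (e_irr : irreflexive e).

(* The non-cover complex of the subgraph induced on [T], with a loop added at
   every vertex of [M]: a marked vertex left uncovered counts as an edge. *)
Definition marked_non_cover (T M S : {set V}) : bool :=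
  (S \subset T) &&
  (~~ (T :&: M \subset S) || [exists u in T :\: S, exists v in T :\: S, e u v]).

Lemma marked_non_coverP (T M S : {set V}) :
  reflect [/\ S \subset T & (exists2 m, m \in T :&: M & m \notin S) \/
             exists u v, [/\ u \in T :\: S, v \in T :\: S & e u v]]
          (marked_non_cover T M S).
Proof.
apply: (iffP andP) => [] [ST H]; split => //.
  case/orP: H => [/subsetPn|/existsP[u /andP[uTS /existsP[v /andP[vTS uv]]]]].
    by left.
  by right; exists u, v.
case: H => [[m mTM mS]|[u [v [uTS vTS uv]]]]; apply/orP.
  by left; apply/subsetPn; exists m.
by right; apply/existsP; exists u; rewrite uTS; apply/existsP; exists v; rewrite vTS.
Qed.

Lemma marked_non_cover_subset (T M S1 S2 : {set V}) :
  S1 \subset S2 -> marked_non_cover T M S2 -> marked_non_cover T M S1.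
Proof.
move=> S12 /marked_non_coverP[S2T H]; apply/marked_non_coverP.
have TS21 : T :\: S2 \subset T :\: S1 by apply: finset.setDS.
split; first exact: fintype.subset_trans S12 S2T.
case: H => [[m mTM mS]|[u [v [uTS vTS uv]]]].
  by left; exists m => //; apply: contra mS; apply: (fintype.subsetP S12).
by right; exists u, v; split => //; apply: (fintype.subsetP TS21).
Qed.

Lemma marked_non_cover_setU1 (T M S : {set V}) p :
  p \in T -> p \notin M ->
  (forall q, q \in T -> e p q -> q \notin S -> q \in M) ->
  marked_non_cover T M S -> marked_non_cover T M (p |: S).
Proof.
move=> pT pM p_nbrs /marked_non_coverP[ST H]; apply/marked_non_coverP.
split; first by rewrite finset.subUset finset.sub1set pT.
have marked q : q \in T -> q \in M -> q \notin S -> exists2 m, m \in T :&: M & m \notin p |: S.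
  move=> qT qM qS; exists q; first by rewrite inE qT.
  by rewrite in_setU1 negb_or qS andbT; apply: contraNneq pM => <-.
case: H => [[m /setIP[mT mM] mS]|[u [v [/setDP[uT uS] /setDP[vT vS] uv]]]].
  by left; exact: marked mT mM mS.
have [pu|up] := eqVneq p u.
  by left; rewrite -pu in uv; exact: marked vT (p_nbrs v vT uv vS) vS.
have [pv|vp] := eqVneq p v.
  by left; rewrite -pv e_sym in uv; exact: marked uT (p_nbrs u uT uv uS) uS.
by right; exists u, v; rewrite !inE negb_or eq_sym up uS uT negb_or eq_sym vp vS vT.
Qed.

Lemma marked_non_cover_setD1 (T M S : {set V}) z :
  z \in T -> z \notin M -> S \subset T :\ z ->
  marked_non_cover (T :\ z) (M :|: [set q | e z q]) S = marked_non_cover T M S.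
Proof.
move=> zT zM STz; have ST : S \subset T := fintype.subset_trans STz (subsetDl _ _).
have zS : z \notin S by apply/negP => /(fintype.subsetP STz); rewrite !inE eqxx.
apply/marked_non_coverP/marked_non_coverP => -[_ H]; split => //.
  case: H => [[m /setIP[/setD1P[mz mT] /setUP[mM|/[!inE] zm]] mS]|[u [v [uTS vTS uv]]]].
  - by left; exists m => //; rewrite inE mT.
  - by right; exists z, m; rewrite !inE zS zT mS mT.
  - have sub : T :\ z :\: S \subset T :\: S by rewrite finset.setSD // subsetDl.
    by right; exists u, v; split => //; apply: (fintype.subsetP sub).
case: H => [[m /setIP[mT mM] mS]|[u [v [/setDP[uT uS] /setDP[vT vS] uv]]]].
  have mz : m != z by apply: contraNneq zM => <-.
  by left; exists m; rewrite // !inE mz mT mM.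
have [uz|uz] := eqVneq u z.
  have vz : v != z by apply: contraTneq uv => ->; rewrite uz e_irr.
  by left; exists v; rewrite // !inE vz vT -uz uv orbT.
have [vz|vz] := eqVneq v z.
  by left; exists u; rewrite // !inE uT uz -vz e_sym uv orbT.
by right; exists u, v; rewrite !inE uz vz uS vS uT vT.
Qed.

Lemma marked_non_cover_marked (T M S : {set V}) :
  T \subset M -> marked_non_cover T M S = (S \proper T).
Proof.
move=> TM; rewrite /marked_non_cover (finset.setIidPl TM) properE.
have [ST|] //= := boolP (S \subset T).
apply/orP/idP => [[//|/existsP[u /andP[/setDP[uT uS] _]]]|]; last by left.
by apply/subsetPn; exists u.
Qed.

Lemma marked_non_cover_nonvoid (T M : {set V}) :
  marked_non_cover T M finset.set0 -> exists t, t \in T.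
Proof.
case/marked_non_coverP => _ [[m /setIP[mT _] _]|[u [_ [/setDP[uT _] _ _]]]].
  by exists m.
by exists u.
Qed.

Lemma non_cover_complexE : non_cover_complex e = marked_non_cover [set: V] finset.set0.
Proof.
apply: funext => S; rewrite /marked_non_cover finset.subsetT finset.setI0 finset.sub0set /=.
apply/existsP/existsP => [[u /existsP[v /and3P[uv uS vS]]]|].
  by exists u; rewrite !inE uS; apply/existsP; exists v; rewrite !inE vS.
move=> [u /andP[/setDP[_ uS] /existsP[v /andP[/setDP[_ vS] uv]]]].
by exists u; apply/existsP; exists v; rewrite uv uS vS.
Qed.

End MarkedNonCover.

Section ForestLeaf.
Variables (V : finType) (e : rel V).
Hypotheses (e_irr : irreflexive e) (e_acyclic : ~ has_cycle e).
Local Open Scope nat_scope.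

(* An edge from the end of a path back into it can only go to the
   second-to-last vertex; any other would close a cycle. *)
Lemma path_back_edge (x c : V) (t : seq V) :
  uniq (x :: t) -> path e x t -> c \in x :: t -> c != last x t ->
  e (last x t) c -> index c (x :: t) + 2 = size (x :: t).
Proof.
set s := x :: t => s_uniq s_path cs c_last last_c; apply/eqP; apply: contraT => ic.
have ics : index c s < size s by rewrite index_mem.
have ic_last : index c s != (size s).-1.
  by apply: contra c_last => /eqP ie; rewrite -{1}(nth_index x cs) ie nth_last.
have sE : drop (index c s) s = c :: drop (index c s).+1 s.
  by rewrite (drop_nth x ics) nth_index.
exfalso; apply: e_acyclic; exists (drop (index c s) s); split.
- by rewrite size_drop; lia.
- exact: drop_uniq.
- rewrite sE /= rcons_path; apply/andP; split.
    by have := @drop_sorted _ e (index c s) s s_path; rewrite sE.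
  suff -> : last c (drop (index c s).+1 s) = last x t by [].
  by rewrite -[RHS]/(last x s) -[in RHS](cat_take_drop (index c s) s) last_cat sE.
Qed.

Lemma acyclic_leaf (U : {set V}) u :
  u \in U -> (forall p, p \in U -> exists2 q, q \in U & e p q) ->
  exists l z, [/\ l \in U, z \in U, e l z & forall q, q \in U -> e l q -> q = z].
Proof.
move=> uU U_nbr; apply: contrapT => no_leaf.
have two_nbrs l z : l \in U -> z \in U -> e l z ->
    exists q, [/\ q \in U, e l q & q != z].
  move=> lU zU lz; apply: contrapT => nq; apply: no_leaf; exists l, z; split => // q qU lq.
  by apply: contrapT => qz; apply: nq; exists q; split => //; exact/eqP.
(* Without a leaf, every uniq path in [U] could be extended forever. *)
have long_path k : exists x t,
    [/\ size t = k, uniq (x :: t), all [in U] (x :: t) & path e x t].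
  elim: k => [|k [x [t [<- xt_uniq xt_U xt_path]]]].
    by exists u, [::]; split => //=; rewrite uU.
  set y := last x t; have yU : y \in U by apply: (allP xt_U); rewrite mem_last.
  have extend a : a \in U -> e y a -> a \notin x :: t -> exists x' t',
      [/\ size t' = (size t).+1, uniq (x' :: t'), all [in U] (x' :: t') & path e x' t'].
    move=> aU ya a_new; exists x, (rcons t a).
    rewrite size_rcons -rcons_cons rcons_uniq all_rcons rcons_path.
    by rewrite a_new aU ya xt_uniq xt_U xt_path.
  have [a aU ya] := U_nbr y yU; have [b [bU yb ba]] := two_nbrs y a yU aU ya.
  have [a_new|a_old] := boolP (a \notin x :: t); first exact: extend a aU ya a_new.
  have [b_new|b_old] := boolP (b \notin x :: t); first exact: extend b bU yb b_new.
  rewrite !negbK in a_old b_old.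
  have not_last q : e y q -> q != y by apply: contraTneq => ->; rewrite e_irr.
  have := path_back_edge xt_uniq xt_path a_old (not_last a ya) ya.
  rewrite -(path_back_edge xt_uniq xt_path b_old (not_last b yb) yb) => /addIn.
  by move/(index_inj x a_old b_old)/eqP; rewrite eq_sym (negbTE ba).
have [x [t [tV /card_uniqP xt_card _ _]]] := long_path #|V|.
by have := max_card (mem (x :: t)); rewrite xt_card /= tV ltnn.
Qed.

End ForestLeaf.

Section Realization.
Variables (R : realType) (V : finType).
Implicit Types (x w : {ptws V -> R}) (D : {set V} -> bool).

Definition supp x : {set V} := [set v | x v != 0].

Definition down_closed D := forall S1 S2 : {set V}, S1 \subset S2 -> D S2 -> D S1.

Lemma supp_subset x (S : {set V}) : (forall v, x v != 0 -> v \in S) -> supp x \subset S.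
Proof. by move=> xS; apply/fintype.subsetP => v; rewrite inE => /xS. Qed.

Lemma sum_indicator (p : V) (c : R) : \sum_v (if v == p then c else 0) = c.
Proof. by rewrite (bigD1 p) //= eqxx big1 ?addr0 // => v /negbTE ->. Qed.

Lemma geom_realization_segment D x w t (S : {set V}) :
  down_closed D -> (forall v, 0 <= x v) -> \sum_v x v = 1 ->
  (forall v, 0 <= w v) -> \sum_v w v = 1 ->
  supp x :|: supp w \subset S -> D S -> 0 <= t <= 1 ->
  geom_realization R D (fun v => t * x v + (1 - t) * w v).
Proof.
move=> dD x_ge0 x_sum w_ge0 w_sum xwS DS /andP[t_ge0 t_le1]; split.
- by move=> v; rewrite addr_ge0 // mulr_ge0 // subr_ge0.
- by rewrite big_split /= -!mulr_sumr x_sum w_sum !mulr1 addrC subrK.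
- apply: dD DS; apply: fintype.subset_trans xwS; apply/fintype.subsetP => v.
  rewrite !inE; apply: contraR; rewrite negb_or !negbK => /andP[/eqP-> /eqP->].
  by rewrite !mulr0 addr0.
Qed.

Definition push_weight (z l : V) x : {ptws V -> R} :=
  fun v => if v == z then 0 else if v == l then x l + x z else x v.

Lemma push_weight_id z l x : x z = 0 -> push_weight z l x = x.
Proof.
move=> xz0; apply: funext => v; rewrite /push_weight.
by case: eqVneq => [->|_] //; case: eqVneq => [->|_]; rewrite ?xz0 ?addr0.
Qed.

Lemma push_weight_ge0 z l x :
  (forall v, 0 <= x v) -> forall v, 0 <= push_weight z l x v.
Proof.
by move=> x_ge0 v; rewrite /push_weight; case: ifP => // _; case: ifP => // _; exact: addr_ge0.
Qed.

Lemma sum_push_weight z l x : z != l -> \sum_v push_weight z l x v = \sum_v x v.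
Proof.
move=> zl; have pE v : push_weight z l x v =
    x v + (if v == l then x z else 0) - (if v == z then x z else 0).
  rewrite /push_weight; have [->|vz] := eqVneq v z; first by rewrite (negbTE zl) addr0 subrr.
  by case: eqVneq => [->|_]; rewrite ?addr0 subr0.
under eq_bigr do rewrite pE.
by rewrite big_split /= big_split /= sumrN !sum_indicator addrK.
Qed.

Lemma supp_push_weight z l x : supp (push_weight z l x) \subset (l |: supp x) :\ z.
Proof.
apply: supp_subset => v; rewrite /push_weight !inE.
have [->|vz] := eqVneq v z; first by rewrite eqxx.
by have [<-|vl] := eqVneq v l => /=.
Qed.

Lemma push_weight_continuous z l v : continuous (fun x => push_weight z l x v).
Proof.
rewrite /push_weight; case: (v == z); first exact: cst_continuous.
case: (v == l); last exact: ptws_proj_continuous.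
by move=> x; apply: continuous_at_add; exact: ptws_proj_continuous.
Qed.

Definition vertex (p : V) : {ptws V -> R} := fun v => if v == p then 1 else 0.

Lemma cone_contractible D (p : V) :
  down_closed D -> D finset.set0 -> (forall S, D S -> D (p |: S)) ->
  contractible R (geom_realization R D).
Proof.
move=> dD D0 Dp.
have vertex_ge0 v : 0 <= vertex p v by rewrite /vertex; case: ifP.
have supp_vertex : supp (vertex p) \subset [set p]%SET.
  by apply: supp_subset => v; rewrite /vertex inE; case: ifP => // _ /eqP.
have vertexD : geom_realization R D (vertex p).
  split => //; first exact: sum_indicator.
  by apply: dD (Dp _ D0); rewrite finset.setU0.
apply: homotopy_equivalent_trans (homotopy_equivalent_set1 R (vertex p) (0 : R)).
apply: (@homotopy_equivalent_retract _ _ _ _ (fun=> vertex p)).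
- by move=> v; exact: cst_continuous.
- by [].
- by move=> y ->.
- by move=> y ->.
- move=> x t [x_ge0 x_sum /Dp Dpx] t01.
  apply: (geom_realization_segment dD x_ge0 x_sum vertex_ge0 (sum_indicator p 1) _ Dpx t01).
  by rewrite finset.setUC; apply: finset.setSU.
Qed.

End Realization.

Section LeafCollapse.
Variables (R : realType) (V : finType) (e : rel V).
Hypotheses (e_sym : symmetric e) (e_irr : irreflexive e).
Local Notation mnc := (marked_non_cover e).

Lemma marked_non_cover_down_closed (T M : {set V}) : down_closed (mnc T M).
Proof. by move=> S1 S2; exact: marked_non_cover_subset. Qed.

Lemma marked_non_cover_collapse (T M : {set V}) (z l : V) :
  z \in T -> l \in T -> z != l -> z \notin M -> l \notin M ->
  (forall q, q \in T -> e l q -> q != z -> q \in M) ->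
  homotopy_equivalent R (geom_realization R (mnc T M))
    (geom_realization R (mnc (T :\ z) (M :|: [set q | e z q]))).
Proof.
move=> zT lT zl zM lM l_nbrs.
have mncE := marked_non_cover_setD1 e_sym e_irr zT zM.
have z_supp x : mnc (T :\ z) (M :|: [set q | e z q]) (supp x) -> x z = 0.
  move=> /marked_non_coverP[/fintype.subsetP /(_ z) + _]; rewrite !inE eqxx /=.
  by case: eqP => // _ /(_ isT).
have pushed x : mnc T M (supp x) -> exists S,
    [/\ mnc T M S, supp x \subset S & supp (push_weight z l x) \subset S :\ z].
  move=> Dx; have [xz0|xz] := eqVneq (x z) 0.
    exists (supp x); rewrite push_weight_id // subsetD1 fintype.subxx inE xz0 eqxx.
    by split.
  exists (l |: supp x); rewrite supp_push_weight finset.subsetUr; split => //.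
  apply: (marked_non_cover_setU1 e_sym) Dx => // q qT lq qx; apply: l_nbrs => //.
  by apply: contraNneq qx => ->; rewrite inE.
apply: (@homotopy_equivalent_retract _ _ _ _ (push_weight z l)).
- exact: push_weight_continuous.
- move=> x [x_ge0 x_sum /pushed[S [DS _ pS]]]; split.
  + exact: push_weight_ge0.
  + by rewrite sum_push_weight.
  + have /marked_non_coverP[ST _] := DS.
    apply: marked_non_cover_subset pS _; rewrite mncE; last exact: finset.setSD.
    exact: marked_non_cover_subset (subsetDl _ _) DS.
- move=> x [x_ge0 x_sum Dx]; split => //.
  by rewrite -mncE //; case/marked_non_coverP: Dx.
- by move=> x [_ _ /z_supp]; exact: push_weight_id.
- move=> x t [x_ge0 x_sum /pushed[S [DS xS pS]]] t01.
  apply: (geom_realization_segment (@marked_non_cover_down_closed T M) x_ge0 x_sum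
    (push_weight_ge0 z l x_ge0) _ _ DS t01).
  - by rewrite sum_push_weight.
  - by rewrite finset.subUset xS (fintype.subset_trans pS) // subsetDl.
Qed.

End LeafCollapse.

Section SimplexBoundarySphere.
Variables (R : realType) (V : finType) (T : {set V}) (k : nat) (t0 : V).
Hypothesis T_card : #|T| = k.+1.
Local Notation n := (k.+1%:R : R).
Implicit Types (x : {ptws V -> R}) (u : {ptws 'I_k -> R}).

Definition vtx (j : 'I_k.+1) : V := nth t0 (enum T) j.
Definition vtx_index (v : V) : 'I_k.+1 := inord (index v (enum T)).

Lemma size_enumT : size (enum T) = k.+1.
Proof. by rewrite -cardE T_card. Qed.

Lemma vtxT j : vtx j \in T.
Proof. by rewrite -mem_enum mem_nth // size_enumT. Qed.

Lemma vtxK j : vtx_index (vtx j) = j.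
Proof.
by apply: val_inj; rewrite /vtx_index /vtx /= index_uniq ?enum_uniq ?size_enumT // inord_val.
Qed.

Lemma vtx_indexK v : v \in T -> vtx (vtx_index v) = v.
Proof.
move=> vT; rewrite /vtx /vtx_index inordK ?nth_index ?mem_enum //.
by rewrite -size_enumT index_mem mem_enum.
Qed.

Lemma sum_vtx (x : V -> R) : (forall v, v \notin T -> x v = 0) ->
  \sum_v x v = \sum_j x (vtx j).
Proof.
move=> xT; rewrite (bigID [in T]) /= [X in _ + X]big1 ?addr0; last by move=> v /xT.
by rewrite -big_enum (big_nth t0) size_enumT big_mkord.
Qed.

Lemma sum_lift_max (F : 'I_k.+1 -> R) :
  \sum_j F j = \sum_(i < k) F (lift ord_max i) + F ord_max.
Proof.
rewrite big_ord_recr /=; congr (_ + _); apply: eq_bigr => i _.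
by congr F; apply: val_inj; rewrite [RHS]lift_max.
Qed.

Lemma n_gt0 : 0 < n. Proof. by rewrite ltr0n. Qed.

Lemma n_neq0 : n != 0. Proof. by rewrite pnatr_eq0. Qed.

(* [to_sphere] takes barycentric coordinates relative to the last vertex and
   normalizes them.  [from_sphere] recovers the zero-sum vector with the given
   coordinates relative to the last vertex ([centered]), rescales it so that
   its smallest entry is [-1/n] ([depth]) and adds the barycenter. *)
Definition boundary_diff x (j : 'I_k.+1) : R := x (vtx j) - x (vtx ord_max).
Definition boundary_norm x : R :=
  Num.sqrt (\sum_(i < k) boundary_diff x (lift ord_max i) ^+ 2).
Definition to_sphere x : {ptws 'I_k -> R} :=
  fun i => boundary_diff x (lift ord_max i) / boundary_norm x.

Definition pad u (j : 'I_k.+1) : R := oapp u 0 (unlift ord_max j).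
Definition centered u (j : 'I_k.+1) : R := pad u j - (\sum_i u i) / n.
Definition depth u : R := \big[Num.max/0]_j - centered u j.
Definition from_sphere u : {ptws V -> R} :=
  fun v => if v \in T then n^-1 + centered u (vtx_index v) / (n * depth u) else 0.

Lemma pad_lift u i : pad u (lift ord_max i) = u i.
Proof. by rewrite /pad liftK. Qed.

Lemma pad_max u : pad u ord_max = 0.
Proof. by rewrite /pad unlift_none. Qed.

Lemma sum_centered u : \sum_j centered u j = 0.
Proof.
rewrite /centered sumrB sum_lift_max pad_max addr0 sumr_const card_ord.
under eq_bigr do rewrite pad_lift.
by rewrite -[X in _ - X]mulr_natr divfK ?subrr // n_neq0.
Qed.

Lemma depth_ge j u : - centered u j <= depth u.
Proof. exact: le_bigmax. Qed.

Lemma depth_gt0 u : sphere R k u -> 0 < depth u.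
Proof.
rewrite /sphere /= => u_norm; rewrite lt_def; apply/andP; split; last first.
  exact: bigmax_ge_id.
apply/eqP => D0.
have c_ge0 j : 0 <= centered u j by rewrite -oppr_le0 -D0 depth_ge.
have c0 : forall j, true -> centered u j = 0.
  by apply/(psumr_eq0P (fun j _ => c_ge0 j)); rewrite sum_centered.
have u0 i : u i = 0.
  have := c0 (lift ord_max i) isT; have := c0 ord_max isT.
  rewrite /centered pad_lift pad_max sub0r => /eqP; rewrite oppr_eq0 => /eqP ->.
  by rewrite subr0.
move: u_norm; rewrite big1 => [/eqP|i _]; first by rewrite eq_sym oner_eq0.
by rewrite u0 expr0n.
Qed.


Lemma depth_attained u : 0 < depth u -> exists j, depth u = - centered u j.
Proof.
have : depth u = 0 \/ exists j, depth u = - centered u j.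
  apply: (big_ind (fun d => d = 0 \/ exists j, d = - centered u j)) => [|a b ha hb|j _].
  - by left.
  - by rewrite maxEle; case: ifP.
  - by right; exists j.
by case=> // ->; rewrite ltxx.
Qed.

Local Notation boundary := (geom_realization R (fun S : {set V} => S \proper T)).

Lemma boundaryP x : boundary x <->
  [/\ forall v, 0 <= x v, \sum_v x v = 1, forall v, v \notin T -> x v = 0
    & exists2 t, t \in T & x t = 0].
Proof.
split => [[x_ge0 x_sum]|[x_ge0 x_sum xT [t tT xt0]]].
  rewrite /= properE => /andP[xT /fintype.subsetPn[t tT]].
  rewrite inE negbK => /eqP xt0; split => //; last by exists t.
  move=> v; apply: contraNeq => xv.
  by apply: (fintype.subsetP xT); rewrite inE.
split => //=; rewrite properE; apply/andP; split.
  by apply: supp_subset => v; apply: contraTT => /xT ->; rewrite negbK.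
by apply/fintype.subsetPn; exists t; rewrite // inE xt0 eqxx.
Qed.

Lemma boundary_sum_vtx x : boundary x -> \sum_j x (vtx j) = 1.
Proof. by case/boundaryP => _ x_sum xT _; rewrite -sum_vtx. Qed.

Lemma from_sphere_vtx u j :
  from_sphere u (vtx j) = n^-1 + centered u j / (n * depth u).
Proof. by rewrite /from_sphere vtxT vtxK. Qed.

Lemma from_sphere_boundary u : sphere R k u -> boundary (from_sphere u).
Proof.
move=> /depth_gt0 D_gt0; have D_neq0 : depth u != 0 by rewrite gt_eqF.
have nD_gt0 : 0 < n * depth u by rewrite mulr_gt0 ?n_gt0.
have vtxE j : n^-1 + centered u j / (n * depth u) = (depth u + centered u j) / (n * depth u).
  by field; rewrite nat1r n_neq0 D_neq0.
apply/boundaryP; split.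
- move=> v; rewrite /from_sphere; case: ifP => // vT.
  by rewrite vtxE divr_ge0 ?(ltW nD_gt0) // -[centered _ _]opprK subr_ge0 depth_ge.
- rewrite sum_vtx; last by move=> v /negbTE vT; rewrite /from_sphere vT.
  under eq_bigr do rewrite from_sphere_vtx.
  rewrite big_split /= -mulr_suml sum_centered mul0r addr0 sumr_const card_ord.
  by rewrite -[X in X = 1]mulr_natr mulVf ?n_neq0.
- by move=> v /negbTE vT; rewrite /from_sphere vT.
- have [j Dj] := depth_attained D_gt0; exists (vtx j); first exact: vtxT.
  by rewrite from_sphere_vtx vtxE Dj addNr mul0r.
Qed.

Lemma boundary_diff_max x : boundary_diff x ord_max = 0.
Proof. exact: subrr. Qed.

Lemma boundary_norm_gt0 x : boundary x -> 0 < boundary_norm x.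
Proof.
move=> xB; have /boundaryP[x_ge0 x_sum xT [t tT xt0]] := xB.
rewrite sqrtr_gt0 lt_def sumr_ge0 ?andbT => [|i _]; last exact: sqr_ge0.
apply/negP => /eqP/(psumr_eq0P (fun i _ => sqr_ge0 _)) d0.
have xj j : x (vtx j) = x (vtx ord_max).
  case: (unliftP ord_max j) => [i ->|->] //.
  by apply/eqP; rewrite -subr_eq0 -sqrf_eq0; apply/eqP/d0.
have := boundary_sum_vtx xB; rewrite big1 => [/eqP|j _]; first by rewrite eq_sym oner_eq0.
by rewrite xj -(xj (vtx_index t)) vtx_indexK.
Qed.

Lemma to_sphere_sphere x : boundary x -> sphere R k (to_sphere x).
Proof.
move=> /boundary_norm_gt0; rewrite sqrtr_gt0 => S_gt0.
rewrite /sphere /=; under eq_bigr do rewrite /to_sphere expr_div_n.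
by rewrite -mulr_suml /boundary_norm sqr_sqrtr ?divff ?ltW // gt_eqF.
Qed.

Lemma to_from_sphere u : sphere R k u -> to_sphere (from_sphere u) = u.
Proof.
move=> u1; have D_gt0 := depth_gt0 u1; have D_neq0 : depth u != 0 by rewrite gt_eqF.
have c_gt0 : 0 < n * depth u by rewrite mulr_gt0 ?n_gt0.
have diffE i : boundary_diff (from_sphere u) (lift ord_max i) = u i / (n * depth u).
  rewrite /boundary_diff !from_sphere_vtx /centered pad_lift pad_max.
  by field; rewrite nat1r n_neq0 D_neq0.
have normE : boundary_norm (from_sphere u) = (n * depth u)^-1.
  rewrite /boundary_norm; under eq_bigr do rewrite diffE expr_div_n.
  rewrite -mulr_suml (u1 : \sum_(i < k) u i ^+ 2 = 1) mul1r -exprVn.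
  by rewrite sqrtr_sqr ger0_norm // invr_ge0 ltW.
apply: funext => i; rewrite /to_sphere diffE normE.
by field; rewrite nat1r n_neq0 D_neq0.
Qed.

Lemma from_to_sphere x : boundary x -> from_sphere (to_sphere x) = x.
Proof.
move=> xB; have /boundaryP[x_ge0 x_sum xT [t tT xt0]] := xB.
have N_gt0 := boundary_norm_gt0 xB; have N_neq0 := gt_eqF N_gt0.
have padE j : pad (to_sphere x) j = boundary_diff x j / boundary_norm x.
  case: (unliftP ord_max j) => [i ->|->]; first by rewrite pad_lift.
  by rewrite pad_max boundary_diff_max mul0r.
have sumE : \sum_i to_sphere x i = (1 - n * x (vtx ord_max)) / boundary_norm x.
  rewrite -mulr_suml; congr (_ / _).
  have := sum_lift_max (boundary_diff x); rewrite boundary_diff_max addr0 => <-.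
  rewrite /boundary_diff sumrB boundary_sum_vtx // sumr_const card_ord.
  by rewrite -[X in _ - X]mulr_natr mulrC.
have centeredE j : centered (to_sphere x) j = (x (vtx j) - n^-1) / boundary_norm x.
  by rewrite /centered padE sumE /boundary_diff; field; rewrite nat1r n_neq0 N_neq0.
have depthE : depth (to_sphere x) = n^-1 / boundary_norm x.
  apply/eqP; rewrite eq_le; apply/andP; split.
    apply: bigmax_le => [|j _]; first by rewrite divr_ge0 ?invr_ge0 ?ltW ?n_gt0.
    rewrite centeredE -mulNr opprB ler_wpM2r ?invr_ge0 ?(ltW N_gt0) //.
    by rewrite gerBl.
  have := depth_ge (vtx_index t) (to_sphere x).
  by rewrite centeredE vtx_indexK // xt0 sub0r mulNr opprK.
apply: funext => v; rewrite /from_sphere; case: ifP => vT; last by rewrite xT // vT.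
by rewrite centeredE depthE vtx_indexK //; field; rewrite nat1r n_neq0 N_neq0.
Qed.

Lemma to_sphere_continuous x : boundary x -> {for x, continuous to_sphere}.
Proof.
move=> xB; have N_neq0 := lt0r_neq0 (boundary_norm_gt0 xB).
have cdiff j y : {for y, continuous (fun y : {ptws V -> R} => boundary_diff y j)}.
  by apply: continuous_at_sub; exact: ptws_proj_continuous.
have cnorm : {for x, continuous (fun y : {ptws V -> R} => boundary_norm y)}.
  rewrite /boundary_norm; apply: continuous_at_sqrt.
  apply: continuous_at_big => [f g|j]; first exact: continuous_at_add.
  exact: continuous_at_mul (cdiff _ _) (cdiff _ _).
apply: ptws_continuous_at => i; rewrite /to_sphere.
have := continuous_at_mul (cdiff (lift ord_max i) x) (continuous_at_inv N_neq0 cnorm).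
exact.
Qed.

Lemma from_sphere_continuous u : sphere R k u -> {for u, continuous from_sphere}.
Proof.
move=> u1; have nD_neq0 : n * depth u != 0 by rewrite mulf_neq0 ?n_neq0 ?gt_eqF ?depth_gt0.
have ccentered j w : {for w, continuous (fun w => centered w j)}.
  apply: continuous_at_sub.
    rewrite /pad; case: (unlift ord_max j) => [i|]; first exact: ptws_proj_continuous.
    exact: cst_continuous.
  apply: continuous_at_mul; last exact: cst_continuous.
  apply: continuous_at_big => [f g|i]; first exact: continuous_at_add.
  exact: ptws_proj_continuous.
have cdepth : {for u, continuous depth}.
  apply: continuous_at_big => [f g|j]; first exact: continuous_at_max.
  exact: continuous_at_opp (ccentered j u).
apply: ptws_continuous_at => v; rewrite /from_sphere.
case: (v \in T); last exact: cst_continuous.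
apply: continuous_at_add; first exact: cst_continuous.
have cnD : {for u, continuous (fun w => n * depth w)}.
  by apply: continuous_at_mul; [exact: cst_continuous|exact: cdepth].
have cinv := continuous_at_inv (f := fun w => n * depth w) nD_neq0 cnD.
have := continuous_at_mul (ccentered (vtx_index v) u) cinv.
exact.
Qed.

Lemma boundary_homotopy_equivalent_sphere : homotopy_equivalent R boundary (sphere R k).
Proof.
apply: (@homeomorphic_homotopy_equivalent _ _ _ _ _ to_sphere from_sphere).
- split; last exact: to_sphere_sphere.
  by apply: continuous_in_subspaceT => x /set_mem /to_sphere_continuous.
- split; last exact: from_sphere_boundary.
  by apply: continuous_in_subspaceT => u /set_mem /from_sphere_continuous.
- exact: from_to_sphere.
- exact: to_from_sphere.
Qed.

End SimplexBoundarySphere.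

Lemma simplex_boundary_sphere (R : realType) (V : finType) (T : {set V}) k :
  #|T| = k.+1 ->
  homotopy_equivalent R (geom_realization R (fun S : {set V} => S \proper T))
    (sphere R k).
Proof.
move=> T_card; have /card_gt0P[t0 _] : (0 < #|T|)%N by rewrite T_card.
exact: boundary_homotopy_equivalent_sphere t0 T_card.
Qed.

Section NonCoverForest.
Variables (R : realType) (V : finType) (e : rel V).
Hypotheses (e_sym : symmetric e) (e_irr : irreflexive e) (e_acyclic : ~ has_cycle e).
Local Notation realization T M := (geom_realization R (marked_non_cover e T M)).

Lemma marked_non_cover_sphere_or_contractible n (T M : {set V}) :
  (#|T| <= n)%N -> marked_non_cover e T M finset.set0 ->
  contractible R (realization T M) \/
  exists k, homotopy_equivalent R (realization T M) (sphere R k).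
Proof.
elim: n T M => [|n IHn] T M T_card D0; have [t tT] := marked_non_cover_nonvoid D0.
  by move: T_card; rewrite leqn0 cards_eq0 => /eqP T0; rewrite T0 inE in tT.
have [TM|TnM] := boolP (T \subset M).
  right; exists #|T|.-1.
  rewrite (_ : marked_non_cover e T M = fun S => S \proper T); last first.
    by apply: funext => S; exact: marked_non_cover_marked.
  by apply: simplex_boundary_sphere; rewrite prednK //; apply/card_gt0P; exists t.
have [[p [pT pM p_nbrs]]|no_cone] := pselect (exists p,
    [/\ p \in T, p \notin M & forall q, q \in T -> e p q -> q \in M]).
  left; apply: (@cone_contractible _ _ _ p); first exact: marked_non_cover_down_closed.
    exact: D0.
  by move=> S; apply: (marked_non_cover_setU1 e_sym) => // q qT pq _; exact: p_nbrs.
have [u0 u0T u0M] := fintype.subsetPn TnM.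
have nbrs p : p \in T :\: M -> exists2 q, q \in T :\: M & e p q.
  move=> /setDP[pT pM]; apply: contrapT => no_q; apply: no_cone; exists p; split => // q qT pq.
  by apply: contrapT => /negP qM; apply: no_q; exists q; rewrite // inE qM qT.
have u0TM : u0 \in T :\: M by rewrite inE u0M u0T.
have [l [z [/setDP[lT lM] /setDP[zT zM] lz l_leaf]]] := acyclic_leaf e_irr e_acyclic u0TM nbrs.
have zl : z != l by apply: contraTneq lz => ->; rewrite e_irr.
have l_nbrs q : q \in T -> e l q -> q != z -> q \in M.
  by move=> qT lq; apply: contraNT => qM; apply/eqP; apply: l_leaf => //; rewrite inE qM qT.
have collapse := marked_non_cover_collapse R e_sym e_irr zT lT zl zM lM l_nbrs.
case: (IHn (T :\ z) (M :|: [set q | e z q])) => [||contr|[k sph]].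
- by rewrite (cardsD1 z T) zT in T_card.
- by rewrite marked_non_cover_setD1 // finset.sub0set.
- by left; exact: homotopy_equivalent_trans collapse contr.
- by right; exists k; exact: homotopy_equivalent_trans collapse sph.
Qed.

End NonCoverForest.

Theorem corollary4p3 (R : realType) (V : finType) (e : rel V) :
  forest e -> has_edge e ->
  contractible R (geom_realization R (non_cover_complex e)) \/
  exists k : nat,
    homotopy_equivalent R (geom_realization R (non_cover_complex e)) (sphere R k).
Proof.
move=> [[e_sym e_irr] e_acyclic] [u [v uv]]; rewrite non_cover_complexE.
apply: (marked_non_cover_sphere_or_contractible R e_sym e_irr e_acyclic (max_card _)).
apply/marked_non_coverP; split; first exact: finset.sub0set.
by right; exists u, v; rewrite !inE.
Qed.
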